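(* Let $G$ be a finite graph with $n$ vertices and let $I$ be a vertex of maximum degree in $\mathcal{I}^0_{\mathrm{AR}}(G)$ (this maximum degree equals $n$, so that the neighbours of $I$ are exactly the sets $I_x=I\triangle\{x\}$, $x\in V(G)$). Let $u,v$ be distinct vertices of $G$. Then $uv\notin E(G)$ if and only if $I_u$ and $I_v$ have a common neighbour $I'\neq I$ in $\mathcal{I}^0_{\mathrm{AR}}(G)$.
   Context: $\mathcal{I}^0_{\mathrm{AR}}(G)$ is the graph whose vertices are all independent sets of $G$ (including the empty set), two independent sets being adjacent iff their symmetric difference has exactly one element. $\triangle$ denotes symmetric difference. *)

From mathcomp Require Import all_boot.
Set Implicit Arguments. Unset Strict Implicit. Unset Printing Implicit Defensive.

(* A finite simple graph: vertex type V : finType, edge relation e : rel V,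
   assumed symmetric and irreflexive in the theorem statement. *)

Definition symdiff (V : finType) (A B : {set V}) : {set V} :=
  (A :\: B) :|: (B :\: A).

Definition indep (V : finType) (e : rel V) (A : {set V}) : bool :=
  [forall x in A, forall y in A, ~~ e x y].

Definition ar_adj (V : finType) (e : rel V) (A B : {set V}) : bool :=
  [&& indep e A, indep e B & #|symdiff A B| == 1].

Definition ar_deg (V : finType) (e : rel V) (A : {set V}) : nat :=
  #|[set B : {set V} | ar_adj e A B]|.

From mathcomp Require Import all_boot.
Set Implicit Arguments. Unset Strict Implicit.

(* The neighbours of an independent set A in I^0_AR(G) are the independent
   toggles A △ {x}, so a vertex of maximum degree #|V| (the degree of the empty
   set) has all its toggles independent.  If uv is not an edge, I △ {u, v} is
   then a common neighbour of I △ {u} and I △ {v} other than I.  Conversely, if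
   uv is an edge then u, v ∉ I, since otherwise one of I, I △ {u}, I △ {v}
   would contain both; so any common neighbour other than I must add u and
   add v, and cannot be independent. *)

Section Symdiff.

Variable V : finType.
Implicit Types A B C : {set V}.

Lemma in_symdiff A B x : (x \in symdiff A B) = (x \in A) (+) (x \in B).
Proof. by rewrite !inE; case: (x \in A); case: (x \in B). Qed.

Lemma symdiffKA A B : symdiff A (symdiff A B) = B.
Proof. by apply/setP => x; rewrite !in_symdiff addKb. Qed.

Lemma symdiffK A B : symdiff (symdiff A B) B = A.
Proof. by apply/setP => x; rewrite !in_symdiff addbK. Qed.

Lemma symdiffAC A B C : symdiff (symdiff A B) C = symdiff (symdiff A C) B.
Proof. by apply/setP => x; rewrite !in_symdiff -!addbA (addbC (x \in B)). Qed.

Lemma symdiff1_inj A : injective (fun x => symdiff A [set x]).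
Proof. by move=> x y /(congr1 (symdiff A)); rewrite !symdiffKA => /set1_inj. Qed.

End Symdiff.

Section IndependentSetGraph.

Variables (V : finType) (e : rel V).
Implicit Types A B : {set V}.

Lemma indepP A :
  reflect (forall x y, x \in A -> y \in A -> ~~ e x y) (indep e A).
Proof.
apply: (iffP forallP) => [indepA x y xA yA | indepA x].
  by move/implyP: (indepA x) => /(_ xA) /forallP /(_ y) /implyP /(_ yA).
by apply/implyP => xA; apply/forallP => y; apply/implyP; apply: indepA.
Qed.

Lemma indep0 : indep e set0.
Proof. by apply/indepP => x y; rewrite inE. Qed.

Lemma ar_adj_symdiff1 A B : ar_adj e A B -> exists x, B = symdiff A [set x].
Proof. by case/and3P => _ _ /cards1P [x defx]; exists x; rewrite -defx symdiffKA. Qed.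

Lemma ar_adj_symdiff1E A x :
  ar_adj e A (symdiff A [set x]) = indep e A && indep e (symdiff A [set x]).
Proof. by rewrite /ar_adj symdiffKA cards1 eqxx andbT. Qed.

Lemma ar_degE A : indep e A ->
  ar_deg e A = #|[set x | indep e (symdiff A [set x])]|.
Proof.
move=> indepA; rewrite /ar_deg -(card_imset _ (@symdiff1_inj V A)).
apply: eq_card => B; rewrite inE; apply/idP/imsetP.
  move=> adjAB; have [x defB] := ar_adj_symdiff1 adjAB.
  by exists x; rewrite // inE -defB; case/and3P: adjAB.
by case=> x; rewrite inE => indepAx ->; rewrite ar_adj_symdiff1E indepA.
Qed.

Lemma ar_deg_le_card A : ar_deg e A <= #|V|.
Proof.
rewrite -cardsT (leq_trans _ (leq_imset_card (fun x => symdiff A [set x]) _)) //.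
apply: subset_leq_card; apply/subsetP => B; rewrite inE => /ar_adj_symdiff1 [x ->].
exact: imset_f.
Qed.

Lemma ar_deg_set0 : irreflexive e -> ar_deg e set0 = #|V|.
Proof.
move=> e_irr; rewrite ar_degE ?indep0 //.
rewrite -cardsT; apply: eq_card => x; rewrite !inE.
by apply/indepP => y z; rewrite !in_symdiff !inE => /eqP -> /eqP ->; rewrite e_irr.
Qed.

Lemma indep_symdiff1_of_deg A x : indep e A -> ar_deg e A = #|V| ->
  indep e (symdiff A [set x]).
Proof.
move=> indepA; rewrite ar_degE // -cardsT => degA.
have all_indep : [set y | indep e (symdiff A [set y])] = setT.
  by apply/eqP; rewrite eqEcard subsetT /= degA.
by have := in_setT x; rewrite -all_indep inE.
Qed.

Lemma indep_symdiff2 A u v : u != v -> ~~ e u v -> ~~ e v u ->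
  indep e (symdiff A [set u]) -> indep e (symdiff A [set v]) ->
  indep e (symdiff (symdiff A [set u]) [set v]).
Proof.
move=> neq_uv nuv nvu /indepP indepAu /indepP indepAv; apply/indepP => x y.
have memAu z : z \in symdiff (symdiff A [set u]) [set v] -> z != v ->
    z \in symdiff A [set u].
  by move=> + /negbTE neq_zv; rewrite in_symdiff in_set1 neq_zv addbF.
have memAv z : z \in symdiff (symdiff A [set u]) [set v] -> z != u ->
    z \in symdiff A [set v].
  by move=> + /negbTE neq_zu; rewrite symdiffAC in_symdiff in_set1 neq_zu addbF.
have neq_vu : v != u by rewrite eq_sym.
have [-> | neq_xv] := eqVneq x v; have [-> | neq_yv] := eqVneq y v.
- by move=> Jv _; apply: indepAv; apply: memAv.
- have [-> // | neq_yu] := eqVneq y u.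
  by move=> Jv Jy; apply: indepAv; apply: memAv.
- have [-> // | neq_xu] := eqVneq x u.
  by move=> Jx Jv; apply: indepAv; apply: memAv.
- by move=> Jx Jy; apply: indepAu; apply: memAu.
Qed.

Lemma notin_of_edge A u v : u != v -> e u v ->
  indep e A -> indep e (symdiff A [set v]) -> u \notin A.
Proof.
move=> neq_uv euv /indepP indepA /indepP indepAv; apply/negP => uA.
have uAv : u \in symdiff A [set v] by rewrite in_symdiff in_set1 uA (negbTE neq_uv).
case vA: (v \in A); first by have := indepA u v uA vA; rewrite euv.
have vAv : v \in symdiff A [set v] by rewrite in_symdiff in_set1 vA eqxx.
by have := indepAv u v uAv vAv; rewrite euv.
Qed.

Lemma mem_common_neighbour A B x : x \notin A ->
  ar_adj e (symdiff A [set x]) B -> B != A -> x \in B.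
Proof.
move=> xA /ar_adj_symdiff1 [y ->]; rewrite !in_symdiff !in_set1 eqxx (negbTE xA) /=.
by apply: contraNN => /eqP <-; rewrite symdiffK.
Qed.

End IndependentSetGraph.

Theorem lemma4p2 (V : finType) (e : rel V)
  (e_sym : symmetric e) (e_irr : irreflexive e)
  (I : {set V}) (HI : indep e I)
  (Hmax : forall J : {set V}, indep e J -> ar_deg e J <= ar_deg e I)
  (u v : V) (Huv : u != v) :
  ~~ e u v <->
  exists I' : {set V}, [/\ I' != I,
      ar_adj e (symdiff I [set u]) I' &
      ar_adj e (symdiff I [set v]) I'].
Proof.
have degI : ar_deg e I = #|V|.
  by apply/eqP; rewrite eqn_leq ar_deg_le_card -(ar_deg_set0 e_irr) Hmax ?indep0.
have indepI1 x : indep e (symdiff I [set x]) := indep_symdiff1_of_deg x HI degI.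
have Hvu : v != u by rewrite eq_sym.
split=> [nuv | [I' [neqI' adjuI' adjvI']]].
  have nvu : ~~ e v u by rewrite e_sym.
  exists (symdiff (symdiff I [set u]) [set v]); split.
  - apply/negP => /eqP /setP /(_ u).
    by rewrite !in_symdiff !in_set1 eqxx (negbTE Huv); case: (u \in I).
  - by rewrite ar_adj_symdiff1E indepI1 indep_symdiff2.
  - by rewrite symdiffAC ar_adj_symdiff1E indepI1 indep_symdiff2.
apply/negP => euv.
have evu : e v u by rewrite e_sym.
have uI' := mem_common_neighbour (notin_of_edge Huv euv HI (indepI1 v)) adjuI' neqI'.
have vI' := mem_common_neighbour (notin_of_edge Hvu evu HI (indepI1 u)) adjvI' neqI'.
by case/and3P: adjuI' => _ /indepP indepI' _; have := indepI' u v uI' vI'; rewrite euv.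
Qed.
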